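(* Let $n\ge 1$ and $L\ge 1$. For each $i=1,\dots,n$ let $\Phi_i$ be a network of the form $\Phi_i(\mathbf{e})=\mathbf{W}_i^{L}\,\sigma(\mathbf{W}_i^{L-1}(\cdots\sigma(\mathbf{W}_i^{1}\mathbf{e})))$, where each $\sigma$ is applied elementwise and is either $\sin(\cdot)$ or $\texttt{ReLU}(\cdot)$, and where the input $\mathbf{e}$ is a coordinate in an arbitrary spectral coordinate system (e.g. a truncated Laplacian eigenvector embedding of a graph node). Define the factorized model $$\Phi(\mathbf{e}_1,\dots,\mathbf{e}_n)=\mathcal{M}\times_1\Phi_1(\mathbf{e}_1)\times_2\Phi_2(\mathbf{e}_2)\cdots\times_n\Phi_n(\mathbf{e}_n),$$ where $\mathcal{M}$ is a core tensor of compatible size and $\times_k$ is the mode-$k$ tensor–vector product. Assume that the $\ell_1$ norm of every weight matrix $\mathbf{W}_i^{(\ell)}$ is bounded by $\xi$ and the $\ell_1$ norm of $\mathcal{M}$ is bounded by $\eta$. Let $\delta=\max\{|\mathbf{e}_i| : i=1,\dots,n\}$ (and analogously including primed coordinates where they appear). Then for every $k\in\{1,\dots,n\}$, $$|\Phi(\mathbf{e}_1,\dots,\mathbf{e}_k,\dots,\mathbf{e}_n)-\Phi(\mathbf{e}_1,\dots,\mathbf{e}_k',\dots,\mathbf{e}_n)|\le\eta\,\xi^{nL}\,\delta^{n-1}\,|\mathbf{e}_k-\mathbf{e}_k'|,$$ so $\Phi$ is Lipschitz continuous in each argument of an arbitrary spectral coordinate system.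
   Context: $|\cdot|$ denotes the $\ell_1$ norm (for matrices, the corresponding norm bounding $|\mathbf{W}\mathbf{x}|\le|\mathbf{W}||\mathbf{x}|$). The networks have no bias terms. The mode-$k$ product of a tensor $\mathcal{M}\in\mathbb{R}^{n_1\times\cdots\times n_n}$ with a vector $\mathbf{u}\in\mathbb{R}^{n_k}$ contracts the $k$-th index of $\mathcal{M}$ against $\mathbf{u}$; after all $n$ products the result is a scalar. *)

From HB Require Import structures.
From mathcomp Require Import all_boot all_order all_algebra.
From mathcomp Require Import reals trigo.
Set Implicit Arguments. Unset Strict Implicit. Unset Printing Implicit Defensive.
Import Order.TTheory GRing.Theory Num.Theory.
Local Open Scope ring_scope.

Inductive act := ASin | AReLU.

Definition actf {R : realType} (a : act) (x : R) : R :=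
  match a with ASin => sin x | AReLU => Num.max 0 x end.

Definition l1v {R : realType} {m : nat} (v : 'cV[R]_m) : R :=
  \sum_(i < m) `|v i 0|.

(* induced l1 operator norm of a matrix (max absolute column sum);
   it satisfies l1v (A *m x) <= l1mx A * l1v x *)
Definition l1mx {R : realType} {m p : nat} (A : 'M[R]_(m, p)) : R :=
  \big[Num.max/0]_(j < p) \sum_(i < m) `|A i j|.

(* Pre-activation of layer l+1 (0-indexed weights: W 0 is W^1):
   netpre 0 = W^1 x,  netpre (l+1) = W^(l+2) sigma_(l+1)(netpre l). *)
Fixpoint netpre {R : realType} (d : nat -> nat)
  (W : forall l : nat, 'M[R]_(d l.+1, d l)) (a : nat -> act)
  (x : 'cV[R]_(d 0%N)) (l : nat) : 'cV[R]_(d l.+1) :=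
  match l return 'cV[R]_(d l.+1) with
  | 0%N => W 0%N *m x
  | l'.+1 => W l'.+1 *m map_mx (actf (a l')) (netpre W a x l')
  end.

Definition net {R : realType} (d : nat -> nat)
  (W : forall l : nat, 'M[R]_(d l.+1, d l)) (a : nat -> act) (L : nat)
  (x : 'cV[R]_(d 0%N)) : 'cV[R]_(d L.-1.+1) :=
  netpre W a x L.-1.

(* Full contraction M x_1 u_1 x_2 u_2 ... x_n u_n of an n-mode tensor
   (tensor = function from multi-indices to R). *)
Definition contract {R : realType} {n : nat} (r : 'I_n -> nat)
  (M : {dffun forall i : 'I_n, 'I_(r i)} -> R)
  (u : forall i : 'I_n, 'cV[R]_(r i)) : R :=
  \sum_(j : {dffun forall i : 'I_n, 'I_(r i)}) (M j * \prod_(i < n) u i (j i) 0).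

Definition l1tensor {R : realType} {n : nat} (r : 'I_n -> nat)
  (M : {dffun forall i : 'I_n, 'I_(r i)} -> R) : R :=
  \sum_(j : {dffun forall i : 'I_n, 'I_(r i)}) `|M j|.

Definition factorized {R : realType} {n : nat} (dims : 'I_n -> nat -> nat)
  (W : forall (i : 'I_n) (l : nat), 'M[R]_(dims i l.+1, dims i l))
  (a : 'I_n -> nat -> act) (L : nat)
  (M : {dffun forall i : 'I_n, 'I_(dims i L.-1.+1)} -> R)
  (e : forall i : 'I_n, 'cV[R]_(dims i 0%N)) : R :=
  contract M (fun i => net (W i) (a i) L (e i)).
Arguments factorized {R n dims} W a L M e.
Arguments net {R d} W a L x.

(** Both activations are 1-Lipschitz and vanish at 0, so a network whose layers
    have l1 operator norm at most [xi] is [xi^L]-Lipschitz for the l1 norm and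
    maps [e] to a vector of l1 norm at most [xi^L |e|].  Changing the k-th
    coordinate only changes the k-th factor of the multilinear contraction, so
    the difference of the two contractions is a single contraction bounded by
    [|M| (xi^L |e_k - e_k'|) (xi^L delta)^(n-1)]. *)
From HB Require Import structures.
From mathcomp Require Import all_boot all_order all_algebra.
From mathcomp Require Import reals trigo.
From mathcomp Require Import topology normedtype derive.
From mathcomp Require Import lra ring.
Import numFieldNormedType.Exports.
Import Order.TTheory GRing.Theory Num.Theory.
Local Open Scope ring_scope.

Lemma sin_lipschitz (R : realType) (x y : R) : `|sin x - sin y| <= `|x - y|.
Proof.
wlog le_xy : x y / x <= y.
  by move=> H; case: (leP x y) => [/H //|/ltW /H]; rewrite distrC [`|x - y|]distrC.
rewrite distrC [`|x - y|]distrC.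
have [|c _ ->] := MVT_segment le_xy (fun z _ => is_derive_sin z).
  by apply/continuous_subspaceT => ?; exact: continuous_sin.
by rewrite normrM ler_piMl // cos_max.
Qed.

Lemma max_lipschitz (R : realDomainType) (c x y : R) :
  `|Num.max c x - Num.max c y| <= `|x - y|.
Proof.
have := ler_norm (x - y); have := ler_norm (y - x); rewrite distrC => ? ?.
by rewrite ler_norml; case: (leP c x); case: (leP c y) => *; apply/andP; split; lra.
Qed.

Section Lipschitz.
Local Set Implicit Arguments.
Local Unset Strict Implicit.
Variable R : realType.

Lemma actf_lipschitz (s : act) (x y : R) :
  `|actf s x - actf s y| <= `|x - y|.
Proof. by case: s; [exact: sin_lipschitz | exact: max_lipschitz]. Qed.

Lemma actf0 (s : act) : actf s (0 : R) = 0.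
Proof. by case: s => /=; rewrite ?sin0 ?maxxx. Qed.

Lemma l1v_ge0 m (v : 'cV[R]_m) : 0 <= l1v v.
Proof. exact: sumr_ge0. Qed.

Lemma l1mx_ge0 m p (A : 'M[R]_(m, p)) : 0 <= l1mx A.
Proof. exact: bigmax_ge_id. Qed.

Lemma normr_entry_le_l1v m (v : 'cV[R]_m) i : `|v i 0| <= l1v v.
Proof. by rewrite /l1v (bigD1 i) //= lerDl sumr_ge0. Qed.

Lemma l1v_mulmx_le m p (A : 'M[R]_(m, p)) (x : 'cV[R]_p) :
  l1v (A *m x) <= l1mx A * l1v x.
Proof.
have entry_le i : `|(A *m x) i 0| <= \sum_(j < p) `|A i j| * `|x j 0|.
  by rewrite mxE; apply: le_trans (ler_norm_sum _ _ _) _; under eq_bigr do rewrite normrM.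
apply: le_trans (ler_sum _ (fun i _ => entry_le i)) _.
rewrite exchange_big /= /l1v mulr_sumr; apply: ler_sum => j _.
by rewrite -mulr_suml ler_wpM2r // (le_bigmax _ (fun j => \sum_i `|A i j|)).
Qed.

Lemma l1v_map_mx_sub_le m (f : R -> R) (x y : 'cV[R]_m) :
  (forall u v, `|f u - f v| <= `|u - v|) ->
  l1v (map_mx f x - map_mx f y) <= l1v (x - y).
Proof. by move=> f_lip; apply: ler_sum => i _; rewrite !mxE. Qed.

Section Network.
Variable d : nat -> nat.
Variables (W : forall l : nat, 'M[R]_(d l.+1, d l)) (a : nat -> act).

Lemma netpre_lipschitz (xi : R) l (x y : 'cV[R]_(d 0%N)) :
  (forall l', (l' <= l)%N -> l1mx (W l') <= xi) ->
  l1v (netpre W a x l - netpre W a y l) <= xi ^+ l.+1 * l1v (x - y).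
Proof.
elim: l => [|l IH] W_le /=; rewrite -mulmxBr; apply: le_trans (l1v_mulmx_le _ _) _.
  by rewrite expr1 ler_wpM2r ?l1v_ge0 ?W_le.
rewrite exprS -mulrA ler_pM ?l1mx_ge0 ?l1v_ge0 ?W_le //.
apply: le_trans (l1v_map_mx_sub_le _ _ (actf_lipschitz (a l))) _.
by apply: IH => l' le_l'l; rewrite W_le // leqW.
Qed.

Lemma netpre0 l : netpre W a 0 l = 0.
Proof.
elim: l => [|l IH] /=; first by rewrite mulmx0.
by rewrite IH (_ : map_mx _ _ = 0) ?mulmx0 //; apply/matrixP => i j; rewrite !mxE actf0.
Qed.

Variables (xi : R) (L : nat).
Hypothesis L_gt0 : (0 < L)%N.
Hypothesis W_le : forall l, (l < L)%N -> l1mx (W l) <= xi.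

Lemma net_lipschitz (x y : 'cV[R]_(d 0%N)) :
  l1v (net W a L x - net W a L y) <= xi ^+ L * l1v (x - y).
Proof.
rewrite /net -[in xi ^+ L](prednK L_gt0); apply: netpre_lipschitz => l le_lL.
by rewrite W_le // -(prednK L_gt0) ltnS.
Qed.

Lemma net_l1v_le (x : 'cV[R]_(d 0%N)) : l1v (net W a L x) <= xi ^+ L * l1v x.
Proof. by have := net_lipschitz x 0; rewrite /net netpre0 !subr0. Qed.

End Network.

Lemma contract_slot_lipschitz n (r : 'I_n -> nat)
    (M : {dffun forall i : 'I_n, 'I_(r i)} -> R)
    (u u' : forall i : 'I_n, 'cV[R]_(r i)) (k : 'I_n) (c : R) :
  (forall i, i != k -> u i = u' i) ->
  (forall i, i != k -> l1v (u i) <= c) ->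
  `|contract M u - contract M u'| <= l1tensor M * l1v (u k - u' k) * c ^+ n.-1.
Proof.
move=> eq_uu' u_le.
rewrite /contract -sumrB -mulrA /l1tensor mulr_suml.
apply: le_trans (ler_norm_sum _ _ _) _; apply: ler_sum => j _.
rewrite -mulrBr normrM ler_wpM2l // (bigD1 k) //= [X in _ - X](bigD1 k) //=.
under [X in _ - _ * X]eq_bigr => i ne_ik do rewrite -eq_uu' //.
rewrite -mulrBl normrM normr_prod; apply: ler_pM; rewrite ?prodr_ge0 //.
  by apply: le_trans (normr_entry_le_l1v _ (j k)); rewrite !mxE.
apply: le_trans (_ : _ <= \prod_(i < n | i != k) c) _; last first.
  by rewrite prodr_const cardC1 card_ord.
by apply: ler_prod => i ne_ik; rewrite normr_ge0 (le_trans (normr_entry_le_l1v _ _)) ?u_le.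
Qed.

End Lipschitz.

Theorem lemma5 (R : realType) (n L : nat) (hn : (0 < n)%N) (hL : (0 < L)%N)
  (dims : 'I_n -> nat -> nat)
  (W : forall (i : 'I_n) (l : nat), 'M[R]_(dims i l.+1, dims i l))
  (a : 'I_n -> nat -> act)
  (M : {dffun forall i : 'I_n, 'I_(dims i L.-1.+1)} -> R)
  (xi eta : R)
  (hW : forall (i : 'I_n) (l : nat), (l < L)%N -> l1mx (W i l) <= xi)
  (hM : l1tensor M <= eta)
  (k : 'I_n) (e e' : forall i : 'I_n, 'cV[R]_(dims i 0%N))
  (he : forall i : 'I_n, i != k -> e i = e' i) :
  let delta := Num.max (\big[Num.max/0]_(i < n) l1v (e i)) (l1v (e' k)) in
  `|factorized W a L M e - factorized W a L M e'|
    <= eta * xi ^+ (n * L) * delta ^+ n.-1 * l1v (e k - e' k).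
Proof.
cbv zeta; set delta := Num.max _ (l1v (e' k)); rewrite /factorized.
set u := fun i => net (W i) (a i) L (e i).
set u' := fun i => net (W i) (a i) L (e' i).
have xi_ge0 : 0 <= xi := le_trans (l1mx_ge0 _) (hW k 0%N hL).
have e_le_delta i : l1v (e i) <= delta.
  by rewrite le_max (le_bigmax _ (fun i => l1v (e i))).
have u_le i : l1v (u i) <= xi ^+ L * delta.
  by rewrite (le_trans (net_l1v_le _ hL (hW i) _)) ?ler_wpM2l ?exprn_ge0.
have du_le : l1v (u k - u' k) <= xi ^+ L * l1v (e k - e' k).
  exact/(net_lipschitz (a k) hL (hW k)).
have eq_uu' i : i != k -> u i = u' i by move/he; rewrite /u /u' => ->.
apply: le_trans (contract_slot_lipschitz M eq_uu' (fun i _ => u_le i)) _.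
have -> : eta * xi ^+ (n * L) * delta ^+ n.-1 * l1v (e k - e' k)
    = eta * (xi ^+ L * l1v (e k - e' k)) * (xi ^+ L * delta) ^+ n.-1.
  by rewrite -[in (n * L)%N](prednK hn) mulSn exprD exprMn -exprM mulnC; ring.
have delta_ge0 : 0 <= delta := le_trans (l1v_ge0 _) (e_le_delta k).
rewrite ler_wpM2r ?exprn_ge0 ?mulr_ge0 ?exprn_ge0 //.
by apply: ler_pM; rewrite ?l1v_ge0 ?sumr_ge0.
Qed.
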